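(* Let $(\boldsymbol\Sigma,\sigma)$ be a primitive Markov subshift on a countable alphabet. Suppose $u\in C^0(\boldsymbol\Sigma)$ is a bounded sub-action for a bounded above and coercive potential $A\in C^0(\boldsymbol\Sigma)$. If $\mu\in\mathcal M_\sigma$ is an $A$-maximizing probability, then $\mu$ is supported in a Markov subshift on a finite alphabet, i.e. there exists an integer $I\ge0$ with $\operatorname{supp}\mu\subseteq\Sigma_I$.
   Context: Let $\mathbf M:\mathbb Z_+\times\mathbb Z_+\to\{0,1\}$ be a transition matrix. Put $\mathcal B_0=\{i:\mathbf M(i,j)=1\text{ for some }j\}$, $\mathcal B_n=\{i:\mathbf M(i,j)=1\text{ for some }j\in\mathcal B_{n-1}\}$. $\mathbf M$ is primitive if there exist $\mathbb F\subseteq\mathbb Z_+$ and an integer $K_0\ge0$ such that for all $i,j\in\bigcap_{n\ge0}\mathcal B_n$ there are $\ell_1,\dots,\ell_{K_0}\in\mathbb F$ with $\mathbf M(i,\ell_1)\mathbf M(\ell_1,\ell_2)\cdots\mathbf M(\ell_{K_0},j)=1$. $\boldsymbol\Sigma=\{\mathbf x\in\mathbb Z_+^{\mathbb Z_+}:\mathbf M(x_j,x_{j+1})=1\ \forall j\}$ with metric $d(\mathbf x,\mathbf y)=\lambda^{\min\{j:x_j\neq y_j\}}$, $\lambda\in(0,1)$ fixed; $\sigma$ the left shift; $[i]=\{\mathbf x:x_0=i\}$. $\mathcal M_\sigma$ = $\sigma$-invariant Borel probabilities; $\beta_A=\sup_{\mu\in\mathcal M_\sigma}\int A\,d\mu$;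 $\mu$ is $A$-maximizing if $\int A\,d\mu=\beta_A$. A sub-action for $A$ is a continuous $u$ with $A+u-u\circ\sigma\le\beta_A$ everywhere. $A$ is coercive if $\lim_{i\to+\infty}\sup A|_{[i]}=-\infty$. For an integer $I\ge0$, $\Sigma_I=\{\mathbf x\in\{0,\dots,I\}^{\mathbb Z_+}:\mathbf M(x_j,x_{j+1})=1\ \forall j\}$. *)

From HB Require Import structures.
From mathcomp Require Import all_boot all_order all_algebra.
From mathcomp Require Import all_classical all_reals all_analysis.
Set Implicit Arguments. Unset Strict Implicit. Unset Printing Implicit Defensive.
Import Order.TTheory GRing.Theory Num.Theory.
Local Open Scope classical_set_scope.
Local Open Scope ring_scope.

(* Points of the full shift Z_+^{Z_+}, alphabet Z_+ = nat = {0,1,2,...}. *)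
Definition seqN := nat -> nat.

Fixpoint Bset (M : nat -> nat -> bool) (n : nat) : set nat :=
  match n with
  | 0 => [set i | exists j, M i j]
  | n'.+1 => [set i | exists j, Bset M n' j /\ M i j]
  end.

Definition primitive (M : nat -> nat -> bool) : Prop :=
  exists (F : set nat) (K0 : nat),
    forall i j, (forall n, Bset M n i) -> (forall n, Bset M n j) ->
      exists s : seq nat, size s = K0 /\ (forall l, l \in s -> F l) /\
        path M i (rcons s j).

Definition Sigma (M : nat -> nat -> bool) : set seqN :=
  [set x | forall j, M (x j) (x j.+1)].

Definition SigmaI (M : nat -> nat -> bool) (I : nat) : set seqN :=
  [set x | (forall j, x j <= I)%N /\ forall j, M (x j) (x j.+1)].

Definition shift (x : seqN) : seqN := fun j => x j.+1.

(* For the metric d(x,y) = lambda^{min{j : x_j <> y_j}} (0<lambda<1) the open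
   ball B(x,r) with lambda^n < r <= lambda^(n-1) is exactly cyl x n, so these
   cylinders form a neighbourhood basis of the metric topology. *)
Definition cyl (x : seqN) (n : nat) : set seqN :=
  [set y | forall j, (j < n)%N -> y j = x j].

Definition shift_open (U : set seqN) : Prop :=
  forall x, U x -> exists n, cyl x n `<=` U.

Definition contSigma {R : realType} (M : nat -> nat -> bool) (f : seqN -> R) :=
  forall x, Sigma M x -> forall e : R, 0 < e ->
    exists n, forall y, Sigma M y -> cyl x n y -> `|f x - f y| < e.

Definition BorelShift := g_sigma_algebraType shift_open.

(* sigma-invariant Borel probabilities on Sigma (as probabilities on the full
   shift concentrated on the closed set Sigma) *)
Definition invariant_prob {R : realType} (M : nat -> nat -> bool)
    (P : probability BorelShift R) : Prop :=
  P (Sigma M) = 1%E /\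
  forall B : set BorelShift, measurable B -> P (shift @^-1` B) = P B.

Definition integral_on {R : realType} (M : nat -> nat -> bool)
    (P : probability BorelShift R) (A : seqN -> R) : \bar R :=
  (\int[P]_(x in (Sigma M : set BorelShift)) (A x)%:E)%E.

Definition betaA {R : realType} (M : nat -> nat -> bool) (A : seqN -> R) : \bar R :=
  ereal_sup [set integral_on M P A | P in [set P | @invariant_prob R M P]].

Definition maximizing {R : realType} (M : nat -> nat -> bool) (A : seqN -> R)
    (P : probability BorelShift R) : Prop :=
  invariant_prob M P /\ integral_on M P A = betaA M A.

Definition subaction {R : realType} (M : nat -> nat -> bool) (A u : seqN -> R) :=
  contSigma M u /\
  forall x, Sigma M x -> ((A x + u x - u (shift x))%:E <= betaA M A)%E.

Definition coercive {R : realType} (M : nat -> nat -> bool) (A : seqN -> R) :=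
  forall K : R, exists N, forall i, (N <= i)%N ->
    forall x, Sigma M x -> x 0%N = i -> A x <= K.

Definition mu_support {R : realType} (M : nat -> nat -> bool)
    (P : probability BorelShift R) : set seqN :=
  [set x | Sigma M x /\
     forall U : set BorelShift, shift_open U -> U x -> (0 < P (U `&` Sigma M))%E].

From Pilot Require Import Defs.
From HB Require Import structures.
From mathcomp Require Import all_boot all_order all_algebra.
From mathcomp Require Import all_classical all_reals all_analysis.
From mathcomp Require Import lra measurable_realfun.
Import Order.TTheory GRing.Theory Num.Theory.
Local Open Scope classical_set_scope.
Local Open Scope ring_scope.

(* Write b for beta_A and U for a bound of |u|.  Coercivity yields N with
   A <= b - 2U - 1 on every cylinder [i] with i >= N, so together with the
   sub-action inequality A <= b + u o sigma - u we get
   A <= b - 1_E + u o sigma - u on Sigma, where E is the set of points whose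
   first letter is at least N.  Integrating against the maximizing measure mu,
   the bounded coboundary u o sigma - u integrates to 0 by invariance, whence
   b <= b - mu(E), i.e. mu(E) = 0.  By invariance again, mu-almost surely no
   letter >= N ever occurs, so supp mu lies in Sigma_N. *)

(* Without this, [shift] would resolve to the translation map of normedtype. *)
Local Notation shift := Defs.shift.

Lemma measurable_shift_open (U : set BorelShift) : shift_open U -> measurable U.
Proof. exact: sub_sigma_algebra. Qed.

Lemma shift_open_cyl (x : seqN) (n : nat) : shift_open (cyl x n).
Proof. by move=> y xy; exists n => z yz j jn; rewrite yz // xy. Qed.

Lemma measurable_shift :
  measurable_fun [set: BorelShift] (shift : BorelShift -> BorelShift).
Proof.
apply: (measurability (shift_open : set (set BorelShift))) => //.
move=> _ [U oU <-]; apply: measurable_shift_open => x [_ /= Ux].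
have [n sub] := oU _ Ux.
by exists n.+1 => y xy; split => //; apply: sub => j jn; apply: xy.
Qed.

Definition Sigma_from (M : nat -> nat -> bool) (j : nat) : set seqN :=
  [set y | forall k, (j <= k)%N -> M (y k) (y k.+1)].

Lemma shift_open_setC_Sigma_from M j : shift_open (~` Sigma_from M j).
Proof.
move=> x; rewrite /setC /Sigma_from /= => /existsNP[k /not_implyP[jk /negP Mk]].
by exists k.+2 => y xy Sy; move: (Sy k jk); rewrite !xy // (negbTE Mk).
Qed.

Lemma measurable_Sigma_from M j : measurable (Sigma_from M j : set BorelShift).
Proof.
rewrite -[X in measurable X]setCK; apply: measurableC.
exact: measurable_shift_open (shift_open_setC_Sigma_from M j).
Qed.

Lemma Sigma_from0 M : Sigma_from M 0 = Sigma M.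
Proof. by apply/seteqP; split => x Sx k //; apply: Sx. Qed.

Lemma measurable_Sigma M : measurable (Sigma M : set BorelShift).
Proof. by rewrite -Sigma_from0; apply: measurable_Sigma_from. Qed.

Lemma Sigma_shift {M x} : Sigma M x -> Sigma M (shift x).
Proof. by move=> Sx k; apply: Sx. Qed.

Lemma measurable_fun_comp_shift {R : realType} {M} {g : seqN -> R} :
  measurable_fun (Sigma M : set BorelShift) g ->
  measurable_fun (Sigma M : set BorelShift) (g \o shift).
Proof.
move=> mg; apply: measurable_comp mg (measurable_funTS measurable_shift).
- exact: measurable_Sigma.
- by move=> _ [x Sx <-]; apply: Sigma_shift.
Qed.

Lemma measurable_fun_contSigma {R : realType} {M} {f : seqN -> R} :
  contSigma M f -> measurable_fun (Sigma M : set BorelShift) f.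
Proof.
move=> cf; apply: (measurability _ (RGenInftyO.measurableE R)) => //.
move=> _ [_ [a ->] <-].
pose V := [set y : seqN | exists n, forall z, Sigma M z -> cyl y n z -> f z < a].
have -> : (Sigma M : set BorelShift) `&` f @^-1` `]-oo, a[ = Sigma M `&` V.
  apply/seteqP; split => y [Sy]; rewrite /preimage /= in_itv /=.
    move=> fya; split => //.
    have [|n near_y] := cf y Sy (a - f y); first by rewrite subr_gt0.
    exists n => z Sz yz; have := near_y z Sz yz.
    rewrite ltr_norml => /andP[? _]; lra.
  by move=> [n near_y]; split => //; apply: near_y.
apply: measurableI; first exact: measurable_Sigma.
apply: measurable_shift_open => y [n near_y]; exists n => z yz.
by exists n => w Sw zw; apply: near_y => // j jn; rewrite zw // yz.
Qed.

(* Requiring admissibility only from time j on, rather than membership in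
   [Sigma M], is what makes [escapeS] an identity of sets. *)
Definition escape (M : nat -> nat -> bool) (N j : nat) : set seqN :=
  Sigma_from M j `&` [set y | (N <= y j)%N].

Lemma measurable_escape M N j : measurable (escape M N j : set BorelShift).
Proof.
apply: measurableI; first exact: measurable_Sigma_from.
by apply: measurable_shift_open => y /= Ny; exists j.+1 => z yz /=; rewrite yz.
Qed.

Lemma escapeS M N j : escape M N j.+1 = shift @^-1` escape M N j.
Proof.
apply/seteqP; split => y [Sy Ny]; split => //.
- by move=> k jk; apply: Sy.
- by case=> // k jk; apply: Sy.
Qed.

Lemma escape_null {R : realType} {M} {P : probability BorelShift R} {N} :
  invariant_prob M P -> P (escape M N 0) = 0%E ->
  forall j, P (escape M N j) = 0%E.
Proof.
move=> [_ Pinv] null0; elim=> // j IH.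
by rewrite escapeS Pinv //; apply: measurable_escape.
Qed.

Lemma mu_support_SigmaI {R : realType} {M} {P : probability BorelShift R} {N} :
  (forall j, P (escape M N j) = 0%E) -> mu_support M P `<=` SigmaI M N.
Proof.
move=> null x [Sx supp_x]; split=> // j; rewrite leqNgt; apply/negP => Nx.
have sub : (cyl x j.+1 `&` Sigma M : set BorelShift) `<=` escape M N j.
  by move=> y [xy Sy]; split; [move=> k _; apply: Sy | rewrite /= xy // ltnW].
have := supp_x _ (shift_open_cyl x j.+1) (fun k _ => erefl).
rewrite (subset_measure0 _ _ sub (null j)) ?ltxx //.
- apply: measurableI; last exact: measurable_Sigma.
  exact: measurable_shift_open (shift_open_cyl x j.+1).
- exact: measurable_escape.
Qed.

Section integral_lemmas.
Context {d} {T : measurableType d} {R : realType}.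
Local Open Scope ereal_scope.

Lemma le_integral_measurable (mu : {measure set T -> \bar R}) {D} {f g : T -> R} :
  measurable D -> measurable_fun D f -> measurable_fun D g ->
  (forall x, D x -> f x <= g x)%R ->
  \int[mu]_(x in D) (f x)%:E <= \int[mu]_(x in D) (g x)%:E.
Proof.
move=> mD mf mg fg; have /measurable_EFinP mf' := mf; have /measurable_EFinP mg' := mg.
have fg' : {in D, forall x, (f x)%:E <= (g x)%:E}.
  by move=> x /set_mem Dx; rewrite lee_fin fg.
rewrite integralE [leRHS]integralE; apply: leeB; apply: ge0_le_integral => //.
- exact: measurable_funepos.
- exact: measurable_funepos.
- by move=> x Dx; apply: funepos_le fg' x (mem_set Dx).
- exact: measurable_funeneg.
- exact: measurable_funeneg.
- by move=> x Dx; apply: funeneg_le fg' x (mem_set Dx).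
Qed.

Variable P : probability T R.

Lemma probability_bounded_integrable {D} {f : T -> R} {C : R} :
  measurable D -> measurable_fun D f -> (forall x, D x -> `|f x| <= C)%R ->
  P.-integrable D (EFin \o f).
Proof.
move=> mD mf fC; apply: measurable_bounded_integrable => //.
  by rewrite (le_lt_trans (probability_le1 _ mD)) ?ltry.
exists C; split; first exact: num_real.
by move=> K CK x Dx; apply: le_trans (fC x Dx) (ltW CK).
Qed.

Lemma integral_full_measure {D} {h : T -> \bar R} :
  measurable D -> P D = 1 -> P.-integrable setT h ->
  \int[P]_(x in D) h x = \int[P]_x h x.
Proof.
move=> mD PD ih; rewrite (negligible_integral (measurableC mD) measurableT ih).
- by rewrite setTD setCK.
- by have := probability_setC P mD; rewrite PD subee.
Qed.

Section invariant_map.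
Variable f : T -> T.
Hypothesis mf : measurable_fun [set: T] f.
Hypothesis Pf : forall B, measurable B -> P (f @^-1` B) = P B.

Lemma integral_invariant_comp {g : T -> R} {C : R} :
  measurable_fun [set: T] g -> (forall x, `|g x| <= C)%R ->
  \int[P]_x (g (f x))%:E = \int[P]_x (g x)%:E.
Proof.
move=> mg gC; transitivity (\int[pushforward P f]_x (g x)%:E).
  rewrite integral_pushforward //; first exact/measurable_EFinP.
  exact: probability_bounded_integrable (measurableT_comp mg mf) (fun x _ => gC _).
by apply: eq_measure_integral => B mB _; exact: Pf.
Qed.

Lemma integral_coboundary {D} {g : T -> R} {C : R} :
  measurable D -> P D = 1 -> (forall x, D x -> D (f x)) ->
  measurable_fun D g -> (forall x, D x -> `|g x| <= C)%R ->
  \int[P]_(x in D) (g (f x) - g x)%:E = 0.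
Proof.
move=> mD PD fD mg gC.
pose h x : R := if x \in D then g x else 0%R.
have mh : measurable_fun [set: T] h.
  rewrite -(setUv D); apply/(measurable_funU _ mD (measurableC mD)); split.
  - by apply: (eq_measurable_fun g _ mg) => x Dx; rewrite /h Dx.
  - apply: (eq_measurable_fun (cst (0%R : R)) _ (measurable_cst _)) => x /set_mem Dx.
    by rewrite /h memNset.
have hC x : (`|h x| <= Num.max C 0)%R.
  rewrite /h le_max; case: ifPn => [/set_mem Dx|_]; first by rewrite gC.
  by rewrite normr0 lexx orbT.
have mhf : measurable_fun [set: T] (h \o f) := measurableT_comp mh mf.
have ih := probability_bounded_integrable measurableT mh (fun x _ => hC x).
have ihf := probability_bounded_integrable measurableT mhf (fun x _ => hC (f x)).
transitivity (\int[P]_(x in D) ((h (f x))%:E - (h x)%:E)).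
  by apply: eq_integral => x /set_mem Dx; rewrite /h (mem_set Dx) (mem_set (fD _ Dx)).
rewrite integral_full_measure //; last exact: integrableB.
rewrite integralB_EFin // (integral_invariant_comp mh hC) subee //.
exact: integrable_fin_num.
Qed.

End invariant_map.
End integral_lemmas.

Lemma invariant_prob_Sigma_nonempty {R : realType} {M} {P : probability BorelShift R} :
  invariant_prob M P -> Sigma M !=set0.
Proof.
move=> [PS _]; apply/set0P/negP => /eqP S0.
by move: PS; rewrite S0 measure0 => /eqP; rewrite eq_sym onee_eq0.
Qed.

Section maximizing_measure.
Context {R : realType} {M : nat -> nat -> bool} {A u : seqN -> R}.
Context {P : probability BorelShift R}.
Hypotheses (cA : contSigma M A) (suA : subaction M A u) (Pmax : maximizing M A P).

Lemma maximizing_betaA_real {CA : R} :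
  (forall x, Sigma M x -> A x <= CA) -> exists b : R, betaA M A = b%:E.
Proof.
move=> leA; have [[PS _] intA] := Pmax.
have [x0 Sx0] := invariant_prob_Sigma_nonempty Pmax.1.
have lo := suA.2 x0 Sx0.
have up : (betaA M A <= CA%:E)%E.
  rewrite -intA; apply: le_trans (le_integral_measurable P (measurable_Sigma M)
    (measurable_fun_contSigma cA) (measurable_cst CA) leA) _.
  rewrite (integral_cst P (measurable_Sigma M) CA%:E).
  by rewrite -[X in (_ * X)%E]/(P (Sigma M)) PS mule1.
move: lo up; case: (betaA M A) => [b _ _|_|]; first by exists b.
- by rewrite leNgt ltry.
- by rewrite leNgt ltNyr.
Qed.

Context {b Cu : R} {N : nat}.
Hypothesis hb : betaA M A = b%:E.
Hypothesis bu : forall x, Sigma M x -> `|u x| <= Cu.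
Hypothesis hN : forall i, (N <= i)%N ->
  forall x, Sigma M x -> x 0%N = i -> A x <= b - 2 * Cu - 1.

Let E := escape M N 0.
Let mS : measurable (Sigma M : set BorelShift) := measurable_Sigma M.
Let mE : measurable (E : set BorelShift) := measurable_escape M N 0.
Let mu : measurable_fun (Sigma M : set BorelShift) u :=
  measurable_fun_contSigma suA.1.
Let mI : measurable_fun (Sigma M : set BorelShift) (\1_E : _ -> R).
Proof. exact: measurable_indic. Qed.

(* On [E], coercivity improves the sub-action inequality by the margin 1. *)
Lemma le_A_coboundary_indic x :
  Sigma M x -> A x <= u (shift x) - u x + (b - \1_E x).
Proof.
move=> Sx; have := bu _ Sx; have := bu _ (Sigma_shift Sx).
rewrite !ler_norml => /andP[? ?] /andP[? ?].
rewrite indicE; case: (boolP (x \in E)) => [/set_mem[_ Nx]|_] /=.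
- by have := hN _ Nx _ Sx erefl; lra.
- by have := suA.2 x Sx; rewrite hb lee_fin; lra.
Qed.

Lemma integral_coboundary_indic :
  (\int[P]_(x in Sigma M) (u (shift x) - u x + (b - \1_E x))%:E = b%:E - P E)%E.
Proof.
have [PS Pinv] := Pmax.1; have mus := measurable_fun_comp_shift mu.
under eq_integral do rewrite EFinD.
rewrite integralD //.
- rewrite (integral_coboundary P shift measurable_shift Pinv mS PS (@Sigma_shift M) mu bu).
  under eq_integral do rewrite EFinB.
  rewrite add0e integralB_EFin //.
  + rewrite (integral_cst P mS b%:E) -[X in (_ * X)%E]/(P (Sigma M)) PS mule1.
    by rewrite integral_indic // setIidl // -Sigma_from0 => y [].
  + by apply: (probability_bounded_integrable P (C := `|b|) mS (measurable_cst b)).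
  + apply: (probability_bounded_integrable P (C := 1) mS mI) => x _.
    by rewrite indicE; case: (_ \in _); rewrite ?normr1 ?normr0.
- apply: (probability_bounded_integrable P (C := Cu + Cu) mS (measurable_funB mus mu)) => x Sx.
  by rewrite (le_trans (ler_normB _ _)) // lerD // bu //; apply: Sigma_shift.
- apply: (probability_bounded_integrable P (C := `|b| + 1) mS
    (measurable_funB (measurable_cst b) mI)) => x _.
  rewrite (le_trans (ler_normB _ _)) // lerD // indicE.
  by case: (_ \in _); rewrite ?normr1 ?normr0.
Qed.

Lemma maximizing_escape_null : P E = 0%E.
Proof.
have [_ intA] := Pmax.
have PE_fin : P E \is a fin_num := fin_num_measure P _ mE.
have : (b%:E <= b%:E - P E)%E.
  rewrite -integral_coboundary_indic -hb -intA.
  apply: le_integral_measurable mS (measurable_fun_contSigma cA) _ le_A_coboundary_indic.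
  apply: measurable_funD; last exact: measurable_funB (measurable_cst b) mI.
  exact: measurable_funB (measurable_fun_comp_shift mu) mu.
have := fine_ge0 (measure_ge0 P E).
rewrite -(fineK PE_fin) -EFinB lee_fin => ? ?.
by apply/eqP; rewrite eqe; apply/eqP; lra.
Qed.

End maximizing_measure.

Theorem mainTheorem7 (R : realType) (M : nat -> nat -> bool)
    (A u : seqN -> R) (P : probability BorelShift R) :
  primitive M ->
  contSigma M A ->
  (exists C : R, forall x, Sigma M x -> A x <= C) ->
  coercive M A ->
  subaction M A u ->
  (exists C : R, forall x, Sigma M x -> `|u x| <= C) ->
  maximizing M A P ->
  exists I : nat, mu_support M P `<=` SigmaI M I.
Proof.
move=> _ cA [CA leA] coerA suA [Cu bu] Pmax.
have [b hb] := maximizing_betaA_real cA suA Pmax leA.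
have [N hN] := coerA (b - 2 * Cu - 1).
exists N; apply/mu_support_SigmaI/(escape_null Pmax.1).
exact (maximizing_escape_null cA suA Pmax hb bu hN).
Qed.
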